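(* Let $M$ be the star matrix of a partition of the hypercube ${\bf Z}_q^n$ into subcubes all of the same dimension, let $T$ be a transfractal submatrix of $M$, let $t$ be a column of $M$ belonging to $T$ and let $s$ be a column of $M$ not belonging to $T$. Then either there is no row in which both $t$ and $s$ contain elements of ${\bf Z}_q$, or every row in which $t$ contains an element of ${\bf Z}_q$ also contains an element of ${\bf Z}_q$ in column $s$; and in the latter case there is a single $a\in{\bf Z}_q$ such that column $s$ contains $a$ in every row in which column $t$ contains an element of ${\bf Z}_q$.
   Context: A subcube of ${\bf Z}_q^n$ is obtained by fixing some coordinates and letting the others run through ${\bf Z}_q$; its dimension is the number of free coordinates, and its star pattern is the vector over ${\bf Z}_q\cup\{*\}$ with the fixed values in fixed coordinates and $*$ in free ones. The star matrix of a partition of ${\bf Z}_q^n$ into subcubes is the matrix whose rows are the star patterns of the subcubes. Fractal matrices: $M_{q,0}$ has one row and zero columns; for $m\ge1$, $M_{q,m}$ consists of $q$ horizontal blocks indexed by $a=0,\dots,q-1$, each with $q^{m-1}$ rows; its first column has entry $a$ in every row of block $a$; its remaining columns are divided into $q$ vertical stripes of width equal to the number of columns of $M_{q,m-1}$, and in block $a$ the $a$-th stripe is a copy of $M_{q,m-1}$ while other stripes of block $a$ are all $*$. A fractal matrix is any matrix obtained from some $M_{q,m}$ ($m\ge1$) by permuting rows and columns. A submatrix $T$ of $M$ (a set of rows and a set of columns, not necessarily consecutive) is a transfractal if $T$ is a fractal matrix and each column of $M$ used by $T$ contains only $*$ in all rows of $M$ not used by $T$. *)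

From mathcomp Require Import all_boot.
Set Implicit Arguments. Unset Strict Implicit. Unset Printing Implicit Defensive.

(* Z_q is represented by 'I_q; an entry of a star pattern is an
   [option 'I_q], with [None] playing the role of the star [*]. *)

Definition in_subcube (q n : nat) (p : 'I_n -> option 'I_q) (x : 'I_n -> 'I_q) : Prop :=
  forall (j : 'I_n) (a : 'I_q), p j = Some a -> x j = a.

Definition subcube_dim (q n : nat) (p : 'I_n -> option 'I_q) : nat :=
  #|[set j : 'I_n | p j == None]|.

Definition is_partition_star_matrix (q n N : nat) (M : 'I_N -> 'I_n -> option 'I_q) : Prop :=
  forall x : 'I_n -> 'I_q, exists! i : 'I_N, in_subcube (M i) x.

Definition equal_dims (q n N : nat) (M : 'I_N -> 'I_n -> option 'I_q) : Prop :=
  forall i i' : 'I_N, subcube_dim (M i) = subcube_dim (M i').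

(* Rows of M_{q,m} are indexed by
   words w of length m over Z_q (the first letter is the block index a,
   the rest indexes the row inside the copy of M_{q,m-1}); columns are
   indexed by words u of length < m (the empty word is the first column,
   a word b :: u' is column u' of the b-th stripe).  The recursion below is
   exactly the recursive definition: first column carries the block index a;
   in block a, stripe a is a copy of M_{q,m-1} and the other stripes are *. *)
Fixpoint fractal_entry (q : nat) (w u : seq 'I_q) : option 'I_q :=
  match w, u with
  | a :: _, [::] => Some a
  | a :: w', b :: u' => if a == b then fractal_entry w' u' else None
  | [::], _ => None
  end.

(* The submatrix of M with row set R and column set C is a fractal matrix:
   it equals M_{q,m} (m >= 1) up to permutation of rows and columns, i.e.
   there are bijections f : R -> rows of M_{q,m} and g : C -> columns of
   M_{q,m} matching all entries. *)
Definition is_fractal_submatrix (q n N : nat) (M : 'I_N -> 'I_n -> option 'I_q)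
    (R : {set 'I_N}) (C : {set 'I_n}) : Prop :=
  exists (m : nat) (f : 'I_N -> seq 'I_q) (g : 'I_n -> seq 'I_q),
    1 <= m /\
    {in R, forall i, size (f i) = m} /\
    {in R &, injective f} /\
    (forall w : seq 'I_q, size w = m -> exists2 i, i \in R & f i = w) /\
    {in C, forall j, size (g j) < m} /\
    {in C &, injective g} /\
    (forall u : seq 'I_q, size u < m -> exists2 j, j \in C & g j = u) /\
    {in R & C, forall i j, M i j = fractal_entry (f i) (g j)}.

Definition is_transfractal (q n N : nat) (M : 'I_N -> 'I_n -> option 'I_q)
    (R : {set 'I_N}) (C : {set 'I_n}) : Prop :=
  is_fractal_submatrix M R C /\
  (forall (i : 'I_N) (j : 'I_n), j \in C -> i \notin R -> M i j = None).

From mathcomp Require Import all_boot.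

(* Take rows i, k of T and a point z of the subcube of row i.  Overwrite z on
   the columns of T by the fixed entries of row k.  The new point lies in some
   row r; r is a row of T, since otherwise its columns of T are all stars and
   z itself would lie in r.  Reading off the columns of T, row r has the same
   fractal word as row k, so r = k.  The coordinate s was not touched, so if
   row k has an entry in column s, every point of the subcube of row i has
   that value in coordinate s, which for q > 1 forces row i to carry the same
   entry (for q <= 1, T has a single row).  So column s is constant on the
   rows of T, and these include every row where column t is not a star. *)

Set Implicit Arguments.
Unset Strict Implicit.
Unset Printing Implicit Defensive.

Lemma ord_le1_eq (q : nat) (a b : 'I_q) : q <= 1 -> a = b.
Proof.
move=> q_le1; have val0 (c : 'I_q) : val c = 0.
  by apply/eqP; rewrite -leqn0 -ltnS (leq_trans (ltn_ord c)).
by apply: val_inj; rewrite !val0.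
Qed.

Lemma fractal_row_eq (q : nat) (w1 w2 : seq 'I_q) : size w1 = size w2 ->
  (forall u, size u < size w1 -> forall a b, fractal_entry w1 u = Some a ->
     fractal_entry w2 u = Some b -> a = b) -> w1 = w2.
Proof.
elim: w1 w2 => [|a w1 IH] [|b w2] //= [eq_size] compat.
have ab : a = b by apply: (compat [::]).
subst b; congr (_ :: _); apply: IH => // u lt_u a' b' E1 E2.
by apply: (compat (a :: u)); rewrite /= ?eqxx.
Qed.

Lemma in_subcube_coord_fixed (q n : nat) (p : 'I_n -> option 'I_q) (j : 'I_n) (b : 'I_q) :
  1 < q -> (forall x, in_subcube p x -> x j = b) -> p j = Some b.
Proof.
move=> q_gt1 fixed.
have pick_in e : in_subcube p (fun j => odflt e (p j)) by move=> j' a /= ->.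
case Ep: (p j) => [a|]; first by have := fixed _ (pick_in b); rewrite Ep /= => ->.
have := fixed _ (pick_in (Ordinal (ltnW q_gt1))).
have := fixed _ (pick_in (Ordinal q_gt1)).
by rewrite Ep /= => <- /(congr1 val).
Qed.

Section Transfractal.

Variables (q n N m : nat) (M : 'I_N -> 'I_n -> option 'I_q).
Variables (R : {set 'I_N}) (C : {set 'I_n}).
Variables (f : 'I_N -> seq 'I_q) (g : 'I_n -> seq 'I_q).

Hypothesis M_partition : is_partition_star_matrix M.
Hypothesis M_star_off_R : forall i j, j \in C -> i \notin R -> M i j = None.
Hypothesis f_size : {in R, forall i, size (f i) = m}.
Hypothesis f_inj : {in R &, injective f}.
Hypothesis g_onto : forall u : seq 'I_q, size u < m -> exists2 j, j \in C & g j = u.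
Hypothesis M_fractal : {in R & C, forall i j, M i j = fractal_entry (f i) (g j)}.

Definition overwrite_on_C (k : 'I_N) (z : 'I_n -> 'I_q) : 'I_n -> 'I_q :=
  fun j => if j \in C then odflt (z j) (M k j) else z j.

Lemma overwrite_row_in_R i k r z : i \in R -> in_subcube (M i) z ->
  in_subcube (M r) (overwrite_on_C k z) -> r \in R.
Proof.
move=> iR z_i z'_r; apply/negPn/negP => rNR.
have z_r : in_subcube (M r) z.
  move=> j a E; case jC: (j \in C); first by rewrite M_star_off_R ?jC in E.
  by have := z'_r j a E; rewrite /overwrite_on_C jC.
have [i0 [_ uniq_i0]] := M_partition z.
by move: rNR; rewrite -(uniq_i0 _ z_r) (uniq_i0 _ z_i) iR.
Qed.

Lemma in_subcube_overwrite i k z : i \in R -> k \in R ->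
  in_subcube (M i) z -> in_subcube (M k) (overwrite_on_C k z).
Proof.
move=> iR kR z_i; have [r [z'_r _]] := M_partition (overwrite_on_C k z).
have rR := overwrite_row_in_R iR z_i z'_r.
suff rk : r = k by rewrite rk in z'_r.
apply: f_inj => //; apply: fractal_row_eq; first by rewrite !f_size.
move=> u; rewrite f_size // => /g_onto[j jC <-] a b Ea Eb.
have := z'_r j a; rewrite M_fractal // Ea /overwrite_on_C jC.
by rewrite M_fractal // Eb => /(_ erefl).
Qed.

Lemma transfractal_row_entry_off_C i k s b : s \notin C -> 1 < q ->
  i \in R -> k \in R -> M k s = Some b -> M i s = Some b.
Proof.
move=> sNC q_gt1 iR kR Eb; apply: in_subcube_coord_fixed => // z z_i.
by have := in_subcube_overwrite iR kR z_i Eb; rewrite /overwrite_on_C (negbTE sNC).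
Qed.

Lemma transfractal_col_const_off_C i k s : s \notin C ->
  i \in R -> k \in R -> M i s = M k s.
Proof.
move=> sNC iR kR; have [q_le1 | q_gt1] := leqP q 1.
  suff -> : i = k by [].
  apply: f_inj => //; apply: fractal_row_eq; first by rewrite !f_size.
  by move=> *; apply: ord_le1_eq.
case Ek: (M k s) => [b|]; first exact: transfractal_row_entry_off_C Ek.
case Ei: (M i s) => [a|] //.
by rewrite (transfractal_row_entry_off_C sNC q_gt1 kR iR Ei) in Ek.
Qed.

End Transfractal.

Theorem corollary1 (q n N : nat) (M : 'I_N -> 'I_n -> option 'I_q)
    (R : {set 'I_N}) (C : {set 'I_n}) (t s : 'I_n) :
  is_partition_star_matrix M ->
  equal_dims M ->
  is_transfractal M R C ->
  t \in C -> s \notin C ->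
  (forall i : 'I_N, ~ (M i t <> None /\ M i s <> None)) \/
  ((forall i : 'I_N, M i t <> None -> M i s <> None) /\
   exists a : 'I_q, forall i : 'I_N, M i t <> None -> M i s = Some a).
Proof.
move=> M_part _ [[m [f [g [_ [f_size [f_inj [_ [_ [_ [g_onto M_fractal]]]]]]]]]] M_star] tC sNC.
have t_in_R i : M i t <> None -> i \in R.
  by move=> Mit; apply/negPn/negP => iNR; apply: Mit; apply: M_star.
have col_s_const := transfractal_col_const_off_C M_part M_star f_size f_inj g_onto M_fractal sNC.
case: (pickP (fun i => (i \in R) && (M i s != None))) => [i0 /andP[i0R]|no_entry].
  case Ei0: (M i0 s) => [a|] // _.
  right; split => [i /t_in_R iR|]; first by rewrite (col_s_const i i0) // Ei0.
  by exists a => i /t_in_R iR; rewrite (col_s_const i i0).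
by left => i [/t_in_R iR]; have := no_entry i; rewrite iR /= => /negbFE/eqP.
Qed.
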